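(* Let $d$ and $r$ be odd integers satisfying $d\geqslant 3$, $r\leqslant d-4$ and $\gcd(d,r)=1$. Let $n$ be an integer such that $n\geqslant (d-r)/2$ and $n\equiv -r/2\pmod{d}$ (that is, $2n\equiv -r\pmod d$). Then none of the numbers in the arithmetic progression \[ \frac{d+r}{2},\ \frac{d+r}{2}+d,\ \ldots,\ \frac{d+r}{2}+dn-2n-r-d \] (with common difference $d$) is a multiple of $n$. *)

From mathcomp Require Import all_boot all_order all_algebra.
Set Implicit Arguments. Unset Strict Implicit. Unset Printing Implicit Defensive.
Import Order.TTheory GRing.Theory Num.Theory.

From mathcomp Require Import all_boot all_order all_algebra.
From mathcomp Require Import zify.
Set Implicit Arguments. Unset Strict Implicit. Unset Printing Implicit Defensive.
Import Order.TTheory GRing.Theory Num.Theory.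
Local Open Scope ring_scope.

(* If [n] divided [a + k d] with quotient [t], then [2 t n = d + r + 2 k d = r] and
   [2 t n = t (2 n) = - t r] modulo [d]; so [d] divides [(t + 1) r], hence [t + 1]
   since [r] is prime to [d].  But [(t + 1) n] lies strictly between [0] and [d n]. *)

Lemma gtzNdvd (d m : int) : 0 < m -> m < d -> ~~ (d %| m)%Z.
Proof. by move=> m_gt0 lt_md; rewrite dvdzE gtnNdvd //; lia. Qed.

Lemma dvdz_cofactor_succ (d r n a k t : int) :
  coprimez d r -> 2 * a = d + r -> (d %| 2 * n + r)%Z ->
  a + k * d = t * n -> (d %| t + 1)%Z.
Proof.
move=> cop_dr two_a d_2nr tn; rewrite -(Gauss_dvdzl _ cop_dr).
have -> : (t + 1) * r = t * (2 * n + r) - (1 + 2 * k) * d by nia.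
by rewrite rpredB ?dvdz_mull ?dvdz_mulr.
Qed.

Theorem lemma4 (d r n : int)
  (hd_odd : ~~ (2 %| d)%Z) (hr_odd : ~~ (2 %| r)%Z)
  (hd3 : 3 <= d) (hrd : r <= d - 4) (hgcd : gcdz d r = 1)
  (hn : ((d - r) %/ 2)%Z <= n) (hnmod : (2 * n == - r %[mod d])%Z) :
  forall k : int, 0 <= k ->
    ((d + r) %/ 2)%Z + k * d <= ((d + r) %/ 2)%Z + d * n - 2 * n - r - d ->
    ~~ (n %| ((d + r) %/ 2)%Z + k * d)%Z.
Proof.
move=> k k_ge0 hle; set a := ((d + r) %/ 2)%Z in hle *.
have two_a : 2 * a = d + r by lia.
have n_lb : d - r <= 2 * n by lia.
have cop_dr : coprimez d r by apply/eqP.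
have d_2nr : (d %| 2 * n + r)%Z by move: hnmod; rewrite eqz_mod_dvd opprK.
apply/dvdzP => -[t tn].
have d_t1 := dvdz_cofactor_succ cop_dr two_a d_2nr tn.
have n_gt0 : 0 < n by lia.
have /andP[tn1_gt0 tn1_lt] : 0 < (t + 1) * n < d * n by lia.
apply/negP: d_t1; apply: gtzNdvd.
- by rewrite -(pmulr_lgt0 _ n_gt0).
- by rewrite -(ltr_pM2r n_gt0).
Qed.
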